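(* Fix a positive integer $k$. Then there are only finitely many allowable critical data sets (for all types $(n,d,k)$ with $n>k$, $d\in\mathbb Z$) for which $C_{12}\le 0$ or $C_{21}\le 0$.
   Context: Let $0<k<n$ and $d$ be integers. Write $d=na-t$ with integers $a,t$, $0\le t<n$, and $ka=l(n-k)+t+m$ with integers $l,m$, $0\le m<n-k$. A critical data set for type $(n,d,k)$ is a tuple $A_c=(\alpha_c,n_1,d_1,k_1,n_2,d_2,k_2)$ with integers $n_i\ge1$, $k_i\ge0$, $d_i$, such that $n_1+n_2=n$, $d_1+d_2=d$, $k_1+k_2=k$, $\frac{d_2}{n_2}>\frac{d_1}{n_1}$, $\frac{k_1}{n_1}>\frac{k_2}{n_2}$, and $\alpha_c=\frac{d_2n_1-d_1n_2}{n_2k_1-n_1k_2}$. It is allowable if moreover $\frac tk<\alpha_c<\frac{ln+t}{k}$, $d\ge\frac1k(n^2-1)-(n-k)$, $d_1\ge\frac1{k_1}(n_1^2-1)-(n_1-k_1)$, and either ($k_2=0$ and $n_2=1$) or ($k_2\ge1$ and $d_2\ge\frac1{k_2}(n_2^2-1)-(n_2-k_2)$). For a critical data set define $C_{12}=-n_1n_2-d_2n_1+d_1n_2+k_1(d_2+n_2-k_2)$ and $C_{21}=-n_1n_2+d_2n_1-d_1n_2+k_2(d_1+n_1-k_1)$. *)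

From mathcomp Require Import all_boot all_order all_algebra.
Set Implicit Arguments. Unset Strict Implicit. Unset Printing Implicit Defensive.
Import Order.TTheory GRing.Theory Num.Theory.
Local Open Scope ring_scope.

Definition q (z : int) : rat := z%:~R.

Definition alpha_c (n1 d1 k1 n2 d2 k2 : int) : rat :=
  q (d2 * n1 - d1 * n2) / q (n2 * k1 - n1 * k2).

(* (alpha_c, n1, d1, k1, n2, d2, k2) is a critical data set for type (n,d,k);
   alpha_c is determined by the other entries (alpha_c above). *)
Definition critical_data (n d k n1 d1 k1 n2 d2 k2 : int) : Prop :=
  [/\ 1 <= n1, 1 <= n2, 0 <= k1, 0 <= k2 &
  [/\ n1 + n2 = n, d1 + d2 = d, k1 + k2 = k,
      q d2 / q n2 > q d1 / q n1 &
      q k1 / q n1 > q k2 / q n2 ]].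

Definition bound_ok (n d k : int) : Prop :=
  q d >= q (n ^+ 2 - 1) / q k - q (n - k).

Definition allowable (n d k n1 d1 k1 n2 d2 k2 : int) : Prop :=
  critical_data n d k n1 d1 k1 n2 d2 k2 /\
  (exists a t l m : int,
     [/\ d = n * a - t, 0 <= t < n,
         k * a = l * (n - k) + t + m, 0 <= m < n - k &
         q t / q k < alpha_c n1 d1 k1 n2 d2 k2 < q (l * n + t) / q k]) /\
  bound_ok n d k /\ bound_ok n1 d1 k1 /\
  ((k2 = 0 /\ n2 = 1) \/ (1 <= k2 /\ bound_ok n2 d2 k2)).

Definition C12 (n1 d1 k1 n2 d2 k2 : int) : int :=
  - n1 * n2 - d2 * n1 + d1 * n2 + k1 * (d2 + n2 - k2).

Definition C21 (n1 d1 k1 n2 d2 k2 : int) : int :=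
  - n1 * n2 + d2 * n1 - d1 * n2 + k2 * (d1 + n1 - k1).

(* Write alpha_c = N / D with N = d2 n1 - d1 n2 and D = n2 k1 - n1 k2, and put
   P = l n + t.  The identity k N - t D = n X, where X = k d2 - k a n2 + k2 t,
   turns t/k < alpha_c < P/k into 0 < X < l D; with w = l D - X > 0 the degrees
   split as  k d1 = (n1 - k1) P + n1 m + w  and  k d2 = (n2 - k2) P + n2 m - w.
   Substituting these into k C12 (resp. n2 C21) and using the lower bounds
   k_i d_i >= n_i^2 - 1 - k_i (n_i - k_i), each of C12 <= 0 and C21 <= 0 forces
   n <= 2 k^3 and P <= k (n + k)^2.  Hence d = d1 + d2 is bounded above, and the
   lower bounds on d1, d2 confine every entry of the data set to a box that
   depends on k only. *)

From mathcomp Require Import all_boot all_order all_algebra.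
From mathcomp Require Import zify ring.
Import Order.TTheory GRing.Theory Num.Theory.
Set Implicit Arguments.
Unset Strict Implicit.
Local Open Scope ring_scope.

Section CriticalArithmetic.
Variables n1 n2 k1 k2 d1 d2 a t l m : int.

Local Notation n := (n1 + n2).
Local Notation k := (k1 + k2).
Local Notation D := (n2 * k1 - n1 * k2).
Local Notation N := (d2 * n1 - d1 * n2).
Local Notation P := (l * n + t).
Local Notation X := (k * d2 - k * a * n2 + k2 * t).
Local Notation w := (l * D - X).

Hypotheses (n1_gt0 : 0 < n1) (n2_gt0 : 0 < n2) (k1_ge0 : 0 <= k1) (k2_ge0 : 0 <= k2).
Hypotheses (slope_d : d1 * n2 < d2 * n1) (slope_k : k2 * n1 < k1 * n2).
Hypotheses (d_eq : d1 + d2 = n * a - t) (t_ge0 : 0 <= t) (t_lt : t < n).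
Hypotheses (ka_eq : k * a = l * (n - k) + t + m) (m_ge0 : 0 <= m) (m_lt : m < n - k).
Hypotheses (alpha_gt : t * D < k * N) (alpha_lt : k * N < P * D).
Hypothesis bound1 : n1 ^+ 2 - 1 - k1 * (n1 - k1) <= k1 * d1.

Lemma k1_gt0 : 0 < k1. Proof. nia. Qed.

Lemma alpha_num_decomp : k * N - t * D = n * X.
Proof. have -> : d1 = n * a - t - d2 by lia. ring. Qed.

Lemma X_gt0 : 0 < X.
Proof. have := alpha_num_decomp; nia. Qed.

Lemma w_gt0 : 0 < w.
Proof. have := alpha_num_decomp; nia. Qed.

Lemma l_gt0 : 0 < l.
Proof. have := X_gt0; have := w_gt0; nia. Qed.

Lemma P_ge0 : 0 <= P.
Proof. have := l_gt0; nia. Qed.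

Lemma k_d1_decomp : k * d1 = (n1 - k1) * P + n1 * m + w.
Proof.
have -> : m = k * a - l * (n - k) - t by lia.
have -> : d1 = n * a - t - d2 by lia.
ring.
Qed.

Lemma k_d2_decomp : k * d2 = (n2 - k2) * P + n2 * m - w.
Proof. have -> : m = k * a - l * (n - k) - t by lia. ring. Qed.

Lemma k_k1k2_le : k * (k1 * k2) <= k ^+ 3.
Proof.
have k1p := k1_gt0; rewrite (exprS k 2); apply: ler_wpM2l; first lia.
by rewrite expr2; clear -k1p k2_ge0; nia.
Qed.

Lemma d1_lbound : - (n1 + 1) <= d1.
Proof.
have : 0 < k1 * (d1 + n1) by move: bound1; rewrite expr2; have := k1_gt0; nia.
have := k1_gt0; nia.
Qed.

Lemma d2_lbound : - (2 * n2) <= d2.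
Proof. have := d1_lbound; nia. Qed.

Lemma k_d_decomp : k * (d1 + d2) = (n - k) * P + n * m.
Proof. have -> : m = k * a - l * (n - k) - t by lia. rewrite d_eq; ring. Qed.

Lemma P_le_k_sum_d : P <= k * (d1 + d2).
Proof.
rewrite k_d_decomp; have := P_ge0 => P0.
have : P <= (n - k) * P by rewrite ler_peMl //; lia.
have : 0 <= n * m by apply: mulr_ge0; lia.
lia.
Qed.

Lemma sum_d_ubound : d1 + d2 <= n * P + n ^+ 2.
Proof.
have kd := k_d_decomp.
have P0 := P_ge0; have k1p := k1_gt0.
have nP : (n - k) * P <= n * P by nia.
have nm : n * m <= n * n by nia.
rewrite expr2; case: (lerP 0 (d1 + d2)) => d0; nia.
Qed.

Lemma k_mul_C12 : k * C12 n1 d1 k1 n2 d2 k2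
  = (n1 - k1) * (k2 * P - k * n2) + k1 * n2 * m + (n - k1) * w - k * k1 * k2.
Proof.
rewrite /C12; have -> : m = k * a - l * (n - k) - t by lia.
have -> : d1 = n * a - t - d2 by lia. ring.
Qed.

Lemma C12_gt0_k2_eq0 : k2 = 0 -> n2 = 1 -> 0 < C12 n1 d1 k1 n2 d2 k2.
Proof.
move=> k2_0 n2_1; have k1p := k1_gt0.
have ew : w = k1 * (l - d2 + a) by rewrite k2_0 n2_1; ring.
have y_gt0 : 0 < l - d2 + a by rewrite -(pmulr_rgt0 _ k1p) -ew w_gt0.
have w_ge : k1 <= k1 * (l - d2 + a) by apply: ler_peMr; lia.
have nk : 1 <= n1 + 1 - k1 by move: m_lt; rewrite k2_0 n2_1; lia.
have := k_mul_C12; rewrite ew k2_0 n2_1 addr0 => eC.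
rewrite -(pmulr_rgt0 _ k1p) eC.
clear -w_ge nk m_ge0 k1p; nia.
Qed.

Lemma C12_gt0_n1_eq_k1 : n1 = k1 -> 0 < C12 n1 d1 k1 n2 d2 k2.
Proof.
move=> n1k1; have k1p := k1_gt0.
have n2k2 : k2 < n2 by move: slope_k; rewrite n1k1 mulrC ltr_pM2l.
have d1_gt0 : 0 < d1.
  have : 0 < k * d1 by rewrite k_d1_decomp n1k1 subrr mul0r add0r; have := w_gt0; nia.
  by rewrite pmulr_rgt0 //; lia.
have d1_lbound : k1 <= d1.
  have : k1 ^+ 2 - 1 <= k1 * d1 by move: bound1; rewrite n1k1 subrr mulr0 subr0.
  rewrite expr2; case: (lerP k1 d1) => // d1_lt; nia.
rewrite /C12 n1k1; nia.
Qed.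

Lemma C12_le0_n1_lt_k1 : C12 n1 d1 k1 n2 d2 k2 <= 0 -> n1 < k1 ->
  n2 <= k1 * k2 /\ P <= n ^+ 2 + k * (k1 * k2).
Proof.
move=> C_le n1k1; have k1p := k1_gt0; have w0 := w_gt0; have P0 := P_ge0.
have d1_gt0 : 0 < d1.
  have : k1 <= k1 * d1 by move: bound1; rewrite expr2; clear -n1k1 n1_gt0; nia.
  clear -k1p; nia.
have eC : k * C12 n1 d1 k1 n2 d2 k2
    = k * k2 * d1 + D * m + (n - k) * w + (k1 - n1) * k * n2 - k * (k1 * k2).
  rewrite /C12; have -> : m = k * a - l * (n - k) - t by lia.
  have -> : d1 = n * a - t - d2 by lia. ring.
have kC : k * C12 n1 d1 k1 n2 d2 k2 <= 0 by rewrite pmulr_rle0 //; lia.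
have t1 : 0 <= k * k2 * d1 by apply: mulr_ge0; [apply: mulr_ge0|]; lia.
have t2 : 0 <= D * m by apply: mulr_ge0; lia.
have t3 : 0 <= (n - k) * w by apply: mulr_ge0; lia.
have t4 : 0 <= (k1 - n1) * k * n2 by apply: mulr_ge0; [apply: mulr_ge0|]; lia.
have n2_le : n2 <= k1 * k2.
  have : k * n2 <= k * (k1 * k2).
    have : k * n2 <= (k1 - n1) * k * n2 by rewrite -mulrA ler_peMl //; [apply: mulr_ge0|]; lia.
    lia.
  by rewrite ler_pM2l //; lia.
have w_le : w <= k * (k1 * k2).
  have : w <= (n - k) * w by rewrite ler_peMl //; lia.
  lia.
split => //.
have eP : (k1 - n1) * P = n1 * m + w - k * d1 by rewrite k_d1_decomp; ring.
have nm : n1 * m <= n ^+ 2 by rewrite expr2; apply: ler_pM; lia.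
have kd1 : 0 <= k * d1 by apply: mulr_ge0; lia.
have : P <= (k1 - n1) * P by rewrite ler_peMl //; lia.
lia.
Qed.

Lemma C12_le0_k1_lt_n1 : 1 <= k2 -> n2 ^+ 2 - 1 - k2 * (n2 - k2) <= k2 * d2 ->
  C12 n1 d1 k1 n2 d2 k2 <= 0 -> k1 < n1 ->
  n <= k1 + k * (k1 * k2) /\ P <= k * (k1 * k2) + k * n ^+ 2.
Proof.
move=> k2_ge1 bound2 C_le k1n1; have k1p := k1_gt0; have w0 := w_gt0; have P0 := P_ge0.
have n2k2 : k2 < n2 by clear -slope_k k1n1 k2_ge0 k1p; nia.
have kC : (n1 - k1) * (k2 * P - k * n2) + k1 * n2 * m + (n - k1) * w - k * k1 * k2 <= 0.
  by rewrite -k_mul_C12 pmulr_rle0 //; lia.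
have bound2_P : k * (k2 * k2 - 1) - k2 * n2 * m + k2 * w <= (n2 - k2) * (k2 * P - k * n2).
  have h1 : k * (n2 ^+ 2 - 1 - k2 * (n2 - k2)) <= k2 * (k * d2).
    by rewrite mulrCA; apply: ler_wpM2l; lia.
  move: h1; rewrite k_d2_decomp expr2; lia.
(* Add (n1 - k1) * bound2_P to (n2 - k2) * kC: the m-terms combine to n2 m D >= 0. *)
have sum_le : (n2 - k2) * ((n - k1) * w) <= (n2 - k2) * (k * (k1 * k2)).
  have h1 : (n1 - k1) * (k * (k2 * k2 - 1) - k2 * n2 * m + k2 * w)
      <= (n1 - k1) * ((n2 - k2) * (k2 * P - k * n2)) by apply: ler_wpM2l; lia.
  have h2 : (n2 - k2) * ((n1 - k1) * (k2 * P - k * n2) + k1 * n2 * m + (n - k1) * w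
      - k * k1 * k2) <= 0 by rewrite pmulr_rle0 //; lia.
  have h3 : 0 <= (n1 - k1) * (k * (k2 * k2 - 1)).
    by apply: mulr_ge0; [lia | apply: mulr_ge0; [lia | clear -k2_ge1; nia]].
  have h4 : 0 <= n2 * m * D by apply: mulr_ge0; [apply: mulr_ge0|]; lia.
  have h5 : 0 <= (n1 - k1) * k2 * w by apply: mulr_ge0; [apply: mulr_ge0|]; lia.
  clear -h1 h2 h3 h4 h5; lia.
have w_le : (n - k1) * w <= k * (k1 * k2) by move: sum_le; rewrite ler_pM2l // subr_gt0.
split.
  have : n - k1 <= (n - k1) * w by rewrite ler_peMr //; lia.
  lia.
have P_term : (n1 - k1) * (k2 * P - k * n2) <= k * (k1 * k2).
  have : 0 <= k1 * n2 * m by apply: mulr_ge0; [apply: mulr_ge0|]; lia.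
  have : 0 <= (n - k1) * w by apply: mulr_ge0; lia.
  clear -kC; lia.
have : P <= (n1 - k1) * k2 * P by apply: ler_peMl; [|clear -k1n1 k2_ge1; nia]; lia.
have : (n1 - k1) * (k * n2) <= k * n ^+ 2.
  rewrite expr2 mulrCA; apply: ler_wpM2l; first lia.
  apply: ler_pM; lia.
clear -P_term; lia.
Qed.

Lemma C21_gt0_k2_eq0 : k2 = 0 -> n2 = 1 -> 0 < C21 n1 d1 k1 n2 d2 k2.
Proof.
move=> k2_0 n2_1; have k1p := k1_gt0.
have eX : X = k1 * (d2 - a) by rewrite k2_0 n2_1; ring.
have y_gt0 : 0 < d2 - a by rewrite -(pmulr_rgt0 _ k1p) -eX X_gt0.
have -> : C21 n1 d1 k1 n2 d2 k2 = (n1 + 1) * (d2 - a) + t - n1.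
  rewrite /C21 k2_0 n2_1.
  have -> : d1 = (n1 + 1) * a - t - d2 by move: d_eq; rewrite n2_1; lia.
  ring.
have : n1 + 1 <= (n1 + 1) * (d2 - a) by rewrite ler_peMr //; lia.
lia.
Qed.

Lemma k1_le_d1_add_n1 : k1 <= d1 + n1.
Proof.
have k1p := k1_gt0.
have : 0 <= k1 * (d1 + n1 - k1) by move: bound1; rewrite expr2; clear -n1_gt0; nia.
by rewrite pmulr_rge0 //; lia.
Qed.

Lemma n_le_kN : n <= k * N.
Proof.
have := alpha_num_decomp; have X0 := X_gt0.
have : 0 <= t * D by apply: mulr_ge0; lia.
have : n <= n * X by apply: ler_peMr; lia.
lia.
Qed.

Section C21_nonpositive.
Hypotheses (k2_ge1 : 1 <= k2) (C21_le0 : C21 n1 d1 k1 n2 d2 k2 <= 0).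

Lemma C21_le0_N_le : n2 ^+ 2 - 1 - k2 * (n2 - k2) <= k2 * d2 ->
  (n2 - k2) * N <= k1 * k2 * n2.
Proof.
move=> bound2.
have eC : n2 * C21 n1 d1 k1 n2 d2 k2 = (n2 - k2) * N + n1 * (k2 * k2 - 1) - k1 * k2 * n2
    + n1 * (k2 * d2 - (n2 ^+ 2 - 1 - k2 * (n2 - k2))) by rewrite /C21 expr2; ring.
have : n2 * C21 n1 d1 k1 n2 d2 k2 <= 0 by rewrite pmulr_rle0.
have : 0 <= n1 * (k2 * k2 - 1) by apply: mulr_ge0; [|clear -k2_ge1]; nia.
have : 0 <= n1 * (k2 * d2 - (n2 ^+ 2 - 1 - k2 * (n2 - k2))).
  by apply: mulr_ge0; [lia | rewrite subr_ge0].
lia.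
Qed.

Lemma C21_le0_n_le : n2 ^+ 2 - 1 - k2 * (n2 - k2) <= k2 * d2 -> n <= 2 * k ^+ 3.
Proof.
move=> bound2; have k1p := k1_gt0; have N_le := C21_le0_N_le bound2.
case: (lerP n2 (2 * k2)) => n2_le.
  have : k2 * n1 < k2 * (2 * k1) by clear -slope_k n2_le k1p; nia.
  have : k <= k ^+ 3 by apply: ler_eXnr; lia.
  rewrite ltr_pM2l; lia.
have h : (n2 - k2) * n <= k * (k1 * k2) * n2.
  have : (n2 - k2) * n <= (n2 - k2) * (k * N) by apply: ler_wpM2l; [lia | exact: n_le_kN].
  have : k * ((n2 - k2) * N) <= k * (k1 * k2 * n2) by apply: ler_wpM2l; lia.
  lia.
have : n2 * n < n2 * (2 * (k * (k1 * k2))).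
  have : 0 < (n2 - 2 * k2) * n by apply: mulr_gt0; lia.
  clear -h; lia.
have := k_k1k2_le; rewrite ltr_pM2l //; lia.
Qed.

Lemma C21_le0_sum_d_le : d1 + d2 <= (n + k) ^+ 2.
Proof.
have k1p := k1_gt0; have e_ge := k1_le_d1_add_n1.
have eC : C21 n1 d1 k1 n2 d2 k2 = N + k2 * (d1 + n1 - k1) - n1 * n2 by rewrite /C21; ring.
have ke : d1 + n1 - k1 <= k2 * (d1 + n1 - k1) by rewrite ler_peMl //; lia.
have N_le : N <= n1 * n2 by lia.
have d1_le : d1 <= n1 * (n2 - 1) + k1 by lia.
have : n1 * (d1 + d2) <= n1 * (n2 + n * (n2 - 1) + n * k1).
  have e : n1 * (d1 + d2) = N + n * d1 by ring.
  have : n * d1 <= n * (n1 * (n2 - 1) + k1) by apply: ler_wpM2l; lia.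
  have : n * k1 <= n1 * (n * k1) by rewrite ler_peMl //; apply: mulr_ge0; lia.
  clear -e N_le; lia.
rewrite ler_pM2l // => d_le.
rewrite expr2; clear -d_le n1_gt0 n2_gt0 k1p k2_ge1; nia.
Qed.

End C21_nonpositive.

Lemma critical_bounds :
    (k2 = 0 /\ n2 = 1) \/ (1 <= k2 /\ n2 ^+ 2 - 1 - k2 * (n2 - k2) <= k2 * d2) ->
    C12 n1 d1 k1 n2 d2 k2 <= 0 \/ C21 n1 d1 k1 n2 d2 k2 <= 0 ->
  n <= 2 * k ^+ 3 /\ P <= k * (n + k) ^+ 2.
Proof.
move=> bound2 C_le; have k1p := k1_gt0; have k_ge1 : 1 <= k by lia.
have kk : k1 * k2 <= k ^+ 2 by rewrite expr2; clear -k1p k2_ge0; nia.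
have k3 := k_k1k2_le.
have k23 : k ^+ 2 <= k ^+ 3 by exact: ler_weXn2l.
have k12 : k <= k ^+ 2 by exact: ler_eXnr.
have nk2 : k * n ^+ 2 + k ^+ 3 <= k * (n + k) ^+ 2.
  rewrite (exprS k 2) -mulrDr; apply: ler_wpM2l; first lia.
  rewrite !expr2; clear -n1_gt0 n2_gt0 k1p k2_ge0; nia.
have n2_le : n ^+ 2 <= k * n ^+ 2.
  by apply: ler_peMl; [apply: exprn_ge0; clear -n1_gt0 n2_gt0; lia | lia].
case: bound2 C_le => [[k2_0 n2_1] | [k2_ge1 bound2]] [C_le | C_le].
- by have := C12_gt0_k2_eq0 k2_0 n2_1; lia.
- by have := C21_gt0_k2_eq0 k2_0 n2_1; lia.
- case: (ltrgtP n1 k1) => [n1k1 | k1n1 | n1k1].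
  + have [n2_le' P_le] := C12_le0_n1_lt_k1 C_le n1k1.
    clear -n2_le' P_le n1k1 kk k3 k23 k12 nk2 n2_le k2_ge1; lia.
  + have [n_le P_le] := C12_le0_k1_lt_n1 k2_ge1 bound2 C_le k1n1.
    clear -n_le P_le kk k3 k23 k12 nk2 n2_le k2_ge1; lia.
  + by have := C12_gt0_n1_eq_k1 n1k1; lia.
- split; first exact: C21_le0_n_le.
  have := P_le_k_sum_d; have : k * (d1 + d2) <= k * (n + k) ^+ 2.
    by apply: ler_wpM2l; [lia | exact: C21_le0_sum_d_le].
  lia.
Qed.

Lemma critical_entries_bounded :
    (k2 = 0 /\ n2 = 1) \/ (1 <= k2 /\ n2 ^+ 2 - 1 - k2 * (n2 - k2) <= k2 * d2) ->
    C12 n1 d1 k1 n2 d2 k2 <= 0 \/ C21 n1 d1 k1 n2 d2 k2 <= 0 ->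
  all (fun x => `|x| <= 2 * (3 * k ^+ 3) ^+ 4) [:: n; d1 + d2; n1; d1; k1; n2; d2; k2].
Proof.
move=> bound2 C_le; have k1p := k1_gt0; have nk0 : 0 <= n + k by lia.
have k_le : k <= k ^+ 3 by apply: ler_eXnr; lia.
have [n_le P_le] := critical_bounds bound2 C_le.
have d1_lb := d1_lbound; have d2_lb := d2_lbound; have d_ub := sum_d_ubound.
have S_ge : n * k + 1 <= (n + k) ^+ 2 by rewrite expr2; clear -n1_gt0 n2_gt0 k1p k2_ge0; nia.
have d_le : d1 + d2 <= (n + k) ^+ 4.
  have h1 : n * P <= n * (k * (n + k) ^+ 2) by rewrite ler_pM2l //; clear -n1_gt0 n2_gt0; lia.
  have h2 : (n * k + 1) * (n + k) ^+ 2 <= (n + k) ^+ 2 * (n + k) ^+ 2.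
    by apply: ler_wpM2r; [exact: exprn_ge0 | exact: S_ge].
  have h3 : n ^+ 2 <= (n + k) ^+ 2.
    by apply: lerXn2r; rewrite ?nnegrE; clear -n1_gt0 n2_gt0 k1p k2_ge0; lia.
  rewrite (_ : 4%N = (2 + 2)%N) // exprD.
  move: ((n + k) ^+ 2) (n ^+ 2) d_ub h1 h2 h3 => S2 n_sq d_ub h1 h2 h3.
  clear -d_ub h1 h2 h3; lia.
have S_le : 2 * (n + k) <= (n + k) ^+ 4.
  rewrite (_ : 4%N = (1 + 3)%N) // exprD expr1 mulrC; apply: ler_wpM2l => //.
  rewrite (exprS _ 2) expr2; clear -n1_gt0 n2_gt0 k1p k2_ge0; nia.
have S_le_k : (n + k) ^+ 4 <= (3 * k ^+ 3) ^+ 4.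
  by apply: lerXn2r; rewrite ?nnegrE; clear -n_le k_le n1_gt0 n2_gt0 k1p k2_ge0; lia.
rewrite /= !ler_norml.
move: ((n + k) ^+ 4) ((3 * k ^+ 3) ^+ 4) d_le S_le S_le_k => S4 B d_le S_le S_le_k.
clear -d1_lb d2_lb d_le S_le S_le_k n1_gt0 n2_gt0 k1p k2_ge0; lia.
Qed.

End CriticalArithmetic.

Lemma ltr_q_frac (a b c e : int) : 0 < b -> 0 < e ->
  (q a / q b < q c / q e) = (a * e < c * b).
Proof.
move=> b_gt0 e_gt0.
by rewrite ltr_pdivrMr ?ltr0z // mulrAC ltr_pdivlMr ?ltr0z // /q -!intrM ltr_int.
Qed.

Lemma bound_ok_int (n d k : int) : 0 < k ->
  bound_ok n d k -> n ^+ 2 - 1 - k * (n - k) <= k * d.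
Proof.
move=> k_gt0; rewrite /bound_ok lerBlDr ler_pdivrMr ?ltr0z // /q -intrD -intrM ler_int.
lia.
Qed.

Lemma allowable_entries_bounded (n d k n1 d1 k1 n2 d2 k2 : int) :
    allowable n d k n1 d1 k1 n2 d2 k2 ->
    C12 n1 d1 k1 n2 d2 k2 <= 0 \/ C21 n1 d1 k1 n2 d2 k2 <= 0 ->
  all (fun x => `|x| <= 2 * (3 * k ^+ 3) ^+ 4) [:: n; d; n1; d1; k1; n2; d2; k2].
Proof.
move=> [[n1_ge1 n2_ge1 k1_ge0 k2_ge0 [<- <- <- slope_d slope_k]]] [alpha_data [_ [bound1 bound2]]].
have n1_gt0 : 0 < n1 by lia.
have n2_gt0 : 0 < n2 by lia.
rewrite ltr_q_frac // in slope_d; rewrite ltr_q_frac // in slope_k.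
have k1_gt0 : 0 < k1 by nia.
have D_gt0 : 0 < n2 * k1 - n1 * k2 by lia.
have k_gt0 : 0 < k1 + k2 by lia.
move: alpha_data => [a [t [l [m [d_eq /andP[t_ge0 t_lt] ka_eq /andP[m_ge0 m_lt]]]]]].
rewrite /alpha_c !ltr_q_frac // => /andP[alpha_gt alpha_lt].
apply: (@critical_entries_bounded _ _ _ _ _ _ a t l m) => //; try lia.
- exact: bound_ok_int.
- case: bound2 => [k2_n2 | [k2_ge1 b2]]; [by left | right].
  by split => //; apply: bound_ok_int => //; lia.
Qed.

Definition int_interval (N : nat) : seq int := [seq i%:Z - N%:Z | i <- iota 0 (2 * N).+1].

Lemma mem_int_interval (N : nat) (x : int) : `|x| <= N%:Z -> x \in int_interval N.
Proof.
rewrite ler_norml => /andP[lo hi]; apply/mapP; exists (absz (x + N%:Z)).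
  by rewrite mem_iota add0n; lia.
by rewrite gez0_abs ?addrK //; lia.
Qed.

Theorem theorem5p8 (k : int) (hk : 0 < k) :
  exists s : seq (int * int * int * int * int * int * int * int),
    forall n d n1 d1 k1 n2 d2 k2 : int,
      k < n ->
      allowable n d k n1 d1 k1 n2 d2 k2 ->
      (C12 n1 d1 k1 n2 d2 k2 <= 0 \/ C21 n1 d1 k1 n2 d2 k2 <= 0) ->
      (n, d, n1, d1, k1, n2, d2, k2) \in s.
Proof.
pose B := absz (2 * (3 * k ^+ 3) ^+ 4).
pose box (A : eqType) (s : seq A) := [seq (x, y) | x <- s, y <- int_interval B].
exists (box _ (box _ (box _ (box _ (box _ (box _ (box _ (int_interval B)))))))).
move=> n d n1 d1 k1 n2 d2 k2 _ allow C_le.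
have in_box x : x \in [:: n; d; n1; d1; k1; n2; d2; k2] -> x \in int_interval B.
  move/(allP (allowable_entries_bounded allow C_le)) => x_le.
  apply: mem_int_interval; rewrite gez0_abs //.
  by apply: mulr_ge0 => //; apply/exprn_ge0/mulr_ge0 => //; apply/exprn_ge0/ltW.
do 7 (apply: allpairs_f; last by apply: in_box; rewrite !inE eqxx ?orbT).
by apply: in_box; rewrite inE eqxx.
Qed.
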